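(* Let $N\ge1$ be an integer and $\phi\in\mathbb{C}\{t\}$ with $\phi(0)=0$. Suppose $\phi(t)\in\overline{\mathbb{H}}$ whenever $t$ (in the domain of convergence) satisfies $t^N\in\mathbb{R}$. Then there exist $\psi_0\in\mathbb{R}\{t\}$, an integer $L\ge1$, a real $b\ge0$, and $\psi_1\in\mathbb{C}\{t\}$ with $\psi_1(0)=1$ such that $$\phi(t)=\psi_0(t^N)+ib\,t^{2LN}\psi_1(t).$$ Moreover, $\phi(t)\in\mathbb{R}$ whenever $t^N\in\mathbb{R}$ if and only if $b=0$ can be taken above, i.e. $\phi(t)=\psi_0(t^N)$ for some $\psi_0\in\mathbb{R}\{t\}$.
   Context: $\mathbb{H}=\{z\in\mathbb{C}:\operatorname{Im}z>0\}$ and $\overline{\mathbb{H}}$ its closure. $\mathbb{C}\{t\}$ (resp. $\mathbb{R}\{t\}$) denotes convergent power series at $0$ with complex (resp. real) coefficients. *)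

From Stdlib Require Import Reals Arith.
From Coquelicot Require Import Coquelicot.
Open Scope R_scope.

(* A power series sum_n a n t^n in C[[t]] is represented by its coefficient
   sequence a : nat -> C. *)

Definition convergent (a : nat -> C) : Prop :=
  exists r : R, 0 < r /\ exists M : R, forall n, Cmod (a n) * r ^ n <= M.

Definition convergentR (a : nat -> R) : Prop :=
  exists r : R, 0 < r /\ exists M : R, forall n, Rabs (a n) * r ^ n <= M.

Definition in_domain (a : nat -> C) (t : C) : Prop :=
  exists r : R, Cmod t < r /\ exists M : R, forall n, Cmod (a n) * r ^ n <= M.

Fixpoint psum (a : nat -> C) (t : C) (n : nat) : C :=
  match n with
  | O => RtoC 0
  | S m => Cplus (psum a t m) (Cmult (a m) (Cpow t m))
  end.

Definition series_value (a : nat -> C) (t : C) (l : C) : Prop :=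
  forall eps : R, 0 < eps -> exists M : nat, forall n, (M <= n)%nat ->
    Cmod (Cminus (psum a t n) l) < eps.

(* coefficients of psi0(t^N) for psi0 with real coefficients *)
Definition subst_pow (psi0 : nat -> R) (N : nat) (k : nat) : C :=
  if Nat.eqb (k mod N) 0 then RtoC (psi0 (k / N)%nat) else RtoC 0.

(* coefficients of t^m * psi1(t) *)
Definition shift (m : nat) (psi1 : nat -> C) (k : nat) : C :=
  if Nat.leb m k then psi1 (k - m)%nat else RtoC 0.

(* Split phi = psi0(t^N) + rest, where psi0 collects the real parts of the coefficients of
   the powers t^(jN); the coefficients of rest at multiples of N are purely imaginary, and
   Im phi(t) = Im rest(t) whenever t^N is real.  If rest <> 0 has leading term a t^k0, then on
   the rays t = s e^(i pi j / N), s -> 0, Im phi(t) has the sign of Im (a w^j) with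
   w = e^(i pi k0 / N).  These are nonnegative for all j; if w <> 1 they sum to 0 over
   j < 2N, which forces w = 1, i.e. 2N | k0, and then a = i b with b > 0.  If Im phi vanishes
   on the rays, the same argument applies to -phi, so rest = 0. *)

From Stdlib Require Import Reals Arith Lia Lra Psatz Classical.
From Stdlib Require ZArith.
From Coquelicot Require Import Coquelicot.
Open Scope R_scope.

Lemma Im_le_Cmod (z : C) : Rabs (Im z) <= Cmod z.
Proof.
  destruct z as [x y]. eapply Rle_trans; [apply Rmax_r | apply (Rmax_Cmod (x, y))].
Qed.

Lemma Cmod_le_Re_Im (z : C) : Cmod z <= Rabs (Re z) + Rabs (Im z).
Proof.
  pose proof (Cmod2_alt z). pose proof (Cmod_ge_0 z).
  pose proof (Rabs_pos (Re z)). pose proof (Rabs_pos (Im z)).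
  pose proof (pow2_abs (Re z)). pose proof (pow2_abs (Im z)).
  nra.
Qed.

Lemma C_Re_Im_eq_0 (z : C) : Re z = 0 -> Im z = 0 -> z = RtoC 0.
Proof. destruct z; unfold Re, Im; simpl; intros -> ->; reflexivity. Qed.

Lemma Re_Cminus (x y : C) : Re (Cminus x y) = Re x - Re y.
Proof. destruct x, y; unfold Re; simpl; ring. Qed.

Lemma Im_Cminus (x y : C) : Im (Cminus x y) = Im x - Im y.
Proof. destruct x, y; unfold Im; simpl; ring. Qed.

Lemma Im_Cplus (x y : C) : Im (Cplus x y) = Im x + Im y.
Proof. destruct x, y; unfold Im; simpl; ring. Qed.

Lemma Im_Cmult (x y : C) : Im (Cmult x y) = Re x * Im y + Im x * Re y.
Proof. destruct x, y; unfold Im, Re; simpl; ring. Qed.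

Lemma Im_Cpow_real (z : C) (m : nat) : Im z = 0 -> Im (Cpow z m) = 0.
Proof.
  intros Hz; induction m as [|m IH]; simpl Cpow; [reflexivity|].
  rewrite Im_Cmult, Hz, IH; ring.
Qed.

Lemma pow_le_antimono (q : R) (k m : nat) : 0 <= q <= 1 -> (k <= m)%nat -> q ^ m <= q ^ k.
Proof.
  intros Hq H; induction H as [|m H IH]; [lra|]; simpl.
  pose proof (pow_le q m (proj1 Hq)); nra.
Qed.

Lemma mul_2N_mod_N (N L : nat) : ((2 * N * L) mod N = 0)%nat.
Proof. rewrite (Nat.mul_comm 2), <- Nat.mul_assoc, Nat.mul_comm; apply Nat.Div0.mod_mul. Qed.

Lemma psum_ext (a b : nat -> C) (t : C) (n : nat) :
  (forall k, a k = b k) -> psum a t n = psum b t n.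
Proof. intros H; induction n; simpl; [reflexivity | now rewrite IHn, H]. Qed.

Lemma psum_plus (a b c : nat -> C) (t : C) (n : nat) :
  (forall k, a k = Cplus (b k) (c k)) -> psum a t n = Cplus (psum b t n) (psum c t n).
Proof. intros H; induction n; simpl; [ring | rewrite IHn, H; ring]. Qed.

Lemma psum_zero_prefix (c : nat -> C) (t : C) (k0 m : nat) :
  (forall k, (k < k0)%nat -> c k = RtoC 0) -> (m <= k0)%nat -> psum c t m = RtoC 0.
Proof.
  intros H Hm; induction m; simpl psum; [reflexivity|].
  rewrite IHm, H by lia; ring.
Qed.

Lemma Im_psum_subst_pow (psi0 : nat -> R) (N : nat) (t : C) (n : nat) :
  Im (Cpow t N) = 0 -> Im (psum (subst_pow psi0 N) t n) = 0.
Proof.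
  intros Ht; induction n as [|n IH]; simpl psum; [reflexivity|].
  rewrite Im_Cplus, IH, Im_Cmult; unfold subst_pow.
  destruct (Nat.eqb_spec (n mod N) 0) as [E|E]; simpl; [|ring].
  replace n with (N * (n / N))%nat at 2 3 by (pose proof (Nat.div_mod_eq n N); lia).
  rewrite Cpow_mult_r, (Im_Cpow_real _ _ Ht); ring.
Qed.

Lemma Im_series_value_eq_0 (a : nat -> C) (t l : C) :
  (forall n, Im (psum a t n) = 0) -> series_value a t l -> Im l = 0.
Proof.
  intros Hre Hl; destruct (Req_dec (Im l) 0) as [E|E]; [exact E|exfalso].
  destruct (Hl (Rabs (Im l)) (Rabs_pos_lt _ E)) as [K HK].
  pose proof (Im_le_Cmod (Cminus (psum a t K) l)) as HI.
  rewrite Im_Cminus, Hre, Rminus_0_l, Rabs_Ropp in HI.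
  specialize (HK K (le_n K)); lra.
Qed.

Section Tails.

Variables (a : nat -> C) (t : C) (rho M q : R).
Hypotheses (Hrho : 0 < rho) (Ha : forall k, Cmod (a k) * rho ^ k <= M)
  (Hq0 : 0 <= q) (Hq1 : q <= / 2) (Ht : Cmod t <= q * rho).

Lemma coef_bound_nonneg : 0 <= M.
Proof. pose proof (Ha O); pose proof (Cmod_ge_0 (a O)); simpl in *; nra. Qed.

(* [q <= 1/2] gives [q^n <= 2 (q^n - q^(n+1))], which telescopes. *)
Lemma psum_tail_bound (m n : nat) : (m <= n)%nat ->
  Cmod (Cminus (psum a t n) (psum a t m)) <= 2 * M * (q ^ m - q ^ n).
Proof.
  pose proof coef_bound_nonneg as HM.
  induction 1 as [|n Hmn IH].
  - unfold Cminus; rewrite Cplus_opp_r, Cmod_0; lra.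
  - simpl psum.
    replace (Cminus (Cplus (psum a t n) (Cmult (a n) (Cpow t n))) (psum a t m))
      with (Cplus (Cminus (psum a t n) (psum a t m)) (Cmult (a n) (Cpow t n))) by ring.
    eapply Rle_trans; [apply Cmod_triangle|].
    rewrite Cmod_mult, Cmod_pow.
    assert (Htn : Cmod t ^ n <= q ^ n * rho ^ n)
      by (rewrite <- Rpow_mult_distr; apply pow_incr; split; [apply Cmod_ge_0 | exact Ht]).
    pose proof (Ha n). pose proof (Cmod_ge_0 (a n)).
    pose proof (pow_le q n Hq0). pose proof (pow_le rho n (Rlt_le _ _ Hrho)).
    assert (Cmod (a n) * Cmod t ^ n <= M * q ^ n) by nra.
    assert (0 <= M * q ^ n * (1 - 2 * q)) by (apply Rmult_le_pos; [apply Rmult_le_pos|]; lra).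
    simpl pow; lra.
Qed.

Lemma psum_cauchy (K m n : nat) : (K <= m)%nat -> (K <= n)%nat ->
  Cmod (Cminus (psum a t n) (psum a t m)) <= 2 * M * q ^ K.
Proof.
  pose proof coef_bound_nonneg.
  assert (Hle : forall u v, (K <= u)%nat -> (u <= v)%nat ->
             Cmod (Cminus (psum a t v) (psum a t u)) <= 2 * M * q ^ K).
  { intros u v Hu Huv; eapply Rle_trans; [exact (psum_tail_bound u v Huv)|].
    pose proof (pow_le q v Hq0). pose proof (pow_le_antimono q K u ltac:(lra) Hu).
    apply Rmult_le_compat_l; lra. }
  intros Hm Hn; destruct (le_ge_dec m n); [now apply Hle|].
  replace (Cminus (psum a t n) (psum a t m)) with (Copp (Cminus (psum a t m) (psum a t n)))
    by ring.
  rewrite Cmod_opp; now apply Hle.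
Qed.

Lemma series_value_exists : exists l, series_value a t l.
Proof.
  pose proof coef_bound_nonneg.
  assert (Hsmall : forall eps, 0 < eps -> exists K, 2 * M * q ^ K < eps).
  { intros eps He.
    destruct (pow_lt_1_zero q ltac:(rewrite Rabs_right; lra) (eps / (2 * M + 1)))
      as [K HK]; [apply Rdiv_lt_0_compat; lra|].
    exists K; specialize (HK K (le_n K)).
    rewrite Rabs_right in HK by (apply Rle_ge, pow_le; lra).
    apply Rmult_lt_compat_r with (r := 2 * M + 1) in HK; [|lra].
    unfold Rdiv in HK; rewrite Rmult_assoc, Rinv_l, Rmult_1_r in HK by lra.
    pose proof (pow_le q K Hq0); nra. }
  assert (Hcomp : forall f : C -> R, (forall z, Rabs (f z) <= Cmod z) ->
            (forall x y, f (Cminus x y) = f x - f y) -> Cauchy_crit (fun n => f (psum a t n))).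
  { intros f Hf Hfm eps He; destruct (Hsmall eps He) as [K HK]; exists K.
    intros n m Hn Hm; unfold R_dist; rewrite <- Hfm.
    eapply Rle_lt_trans; [apply Hf|].
    eapply Rle_lt_trans; [exact (psum_cauchy K m n Hm Hn) | exact HK]. }
  destruct (Rcomplete.R_complete _ (Hcomp Re re_le_Cmod Re_Cminus)) as [lu Hu].
  destruct (Rcomplete.R_complete _ (Hcomp Im Im_le_Cmod Im_Cminus)) as [lv Hv].
  exists (lu, lv); intros eps He.
  destruct (Hu (eps / 2) ltac:(lra)) as [N1 H1].
  destruct (Hv (eps / 2) ltac:(lra)) as [N2 H2].
  exists (Nat.max N1 N2); intros n Hn.
  specialize (H1 n ltac:(lia)); specialize (H2 n ltac:(lia)); unfold R_dist in *.
  eapply Rle_lt_trans; [apply Cmod_le_Re_Im|].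
  rewrite Re_Cminus, Im_Cminus; simpl; lra.
Qed.

End Tails.

Lemma convergent_shift_factor (c : nat -> C) (m : nat) :
  convergent c -> (forall k, (k < m)%nat -> c k = RtoC 0) -> c m <> RtoC 0 ->
  exists psi1, convergent psi1 /\ psi1 O = RtoC 1 /\
    forall k, c k = Cmult (c m) (shift m psi1 k).
Proof.
  intros [rho [Hrho [M HM]]] Hpre Hm.
  assert (Hpos : 0 < Cmod (c m)) by now apply Cmod_gt_0.
  exists (fun k => Cdiv (c (k + m)%nat) (c m)); split; [|split].
  - exists rho; split; [assumption|]; exists (M / (rho ^ m * Cmod (c m))); intros n.
    pose proof (pow_lt rho m Hrho); pose proof (HM (n + m)%nat) as Hnm.
    rewrite pow_add in Hnm; rewrite Cmod_div by assumption.
    apply Rmult_le_reg_r with (rho ^ m * Cmod (c m)); [nra|].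
    unfold Rdiv; field_simplify; try lra; nra.
  - simpl; field; assumption.
  - intros k; unfold shift; destruct (Nat.leb_spec m k) as [Hk|Hk].
    + replace (k - m + m)%nat with k by lia; field; assumption.
    + rewrite Hpre by assumption; ring.
Qed.

Lemma first_nonzero_coef (c : nat -> C) :
  ~ (forall k, c k = RtoC 0) -> exists k0, c k0 <> RtoC 0 /\ forall k, (k < k0)%nat -> c k = RtoC 0.
Proof.
  intros Hc; apply not_all_ex_not in Hc.
  destruct (dec_inh_nat_subset_has_unique_least_element (fun k => c k <> RtoC 0)
              (fun k => classic _) Hc) as [k0 [[Hk0 Hmin] _]].
  exists k0; split; [assumption|]; intros k Hk; apply NNPP; intros Hck.
  specialize (Hmin k Hck); lia.
Qed.

Lemma convergent_const (z : C) : convergent (fun _ => z).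
Proof. exists 1; split; [lra|]; exists (Cmod z); intros n; rewrite pow1; lra. Qed.

Definition polar (r x : R) : C := (r * cos x, r * sin x).

Lemma Cpow_polar (r x : R) (n : nat) : Cpow (polar r x) n = polar (r ^ n) (INR n * x).
Proof.
  induction n as [|n IH]; unfold polar in *.
  - simpl; rewrite Rmult_0_l, cos_0, sin_0; apply injective_projections; simpl; ring.
  - simpl Cpow; rewrite IH, S_INR.
    replace ((INR n + 1) * x) with (x + INR n * x) by ring.
    rewrite cos_plus, sin_plus; apply injective_projections; simpl; ring.
Qed.

Lemma Cmod_polar (r x : R) : 0 <= r -> Cmod (polar r x) = r.
Proof.
  intros Hr; pose proof (Cmod2_alt (polar r x)); pose proof (Cmod_ge_0 (polar r x)).
  pose proof (sin2_cos2 x); unfold Rsqr in *; unfold polar, Re, Im in *; simpl in *.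
  nra.
Qed.

Lemma Im_Cmult_polar (a : C) (r x : R) :
  Im (Cmult a (polar r x)) = r * Im (Cmult a (polar 1 x)).
Proof. destruct a; unfold polar, Im; simpl; ring. Qed.

Lemma polar_1_pow_2N (N k : nat) : (1 <= N)%nat ->
  Cpow (polar 1 (PI * INR k / INR N)) (2 * N) = RtoC 1.
Proof.
  intros HN; assert (INR N <> 0) by (apply not_0_INR; lia).
  rewrite Cpow_polar, pow1; unfold polar.
  replace (INR (2 * N) * (PI * INR k / INR N)) with (0 + 2 * INR k * PI)
    by (rewrite mult_INR; simpl INR; field; auto).
  rewrite cos_period, sin_period, cos_0, sin_0; apply injective_projections; simpl; ring.
Qed.

Lemma sin_PI_INR (j : nat) : sin (PI * INR j) = 0.
Proof. apply sin_eq_0_1; exists (Z.of_nat j); rewrite <- INR_IZR_INZ; ring. Qed.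

Lemma sin_PI_div_eq_0 (N k : nat) : (1 <= N)%nat ->
  sin (PI * INR k / INR N) = 0 -> (k mod N = 0)%nat.
Proof.
  intros HN H; apply sin_eq_0_0 in H; destruct H as [m Hm].
  assert (INR N <> 0) by (apply not_0_INR; lia).
  pose proof PI_neq0.
  assert (Hk : INR k = IZR m * INR N).
  { apply Rmult_eq_reg_l with PI; auto.
    apply Rmult_eq_reg_r with (/ INR N); [|apply Rinv_neq_0_compat; auto].
    unfold Rdiv in Hm; rewrite Hm; field; auto. }
  rewrite !INR_IZR_INZ, <- mult_IZR in Hk; apply eq_IZR in Hk.
  assert (Z.of_nat (k mod N) = 0%Z) by (rewrite Znat.Nat2Z.inj_mod, Hk; apply Z.mod_mul; lia).
  lia.
Qed.

Lemma polar_1_eq_1 (N k : nat) : (1 <= N)%nat ->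
  polar 1 (PI * INR k / INR N) = RtoC 1 -> exists L, k = (2 * N * L)%nat.
Proof.
  intros HN E; assert (INR N <> 0) by (apply not_0_INR; lia).
  set (th := PI * INR k / INR N) in E.
  assert (Hcos : cos th = 1) by (apply (f_equal fst) in E; unfold polar in E; simpl in E; lra).
  replace th with (2 * (th / 2)) in Hcos by field; rewrite cos_2a_sin in Hcos.
  assert (Hsin : sin (th / 2) = 0) by nra.
  replace (th / 2) with (PI * INR k / INR (2 * N)) in Hsin
    by (unfold th; rewrite mult_INR; simpl INR; field; auto).
  apply sin_PI_div_eq_0 in Hsin; [|lia].
  exists (k / (2 * N))%nat; pose proof (Nat.div_mod_eq k (2 * N)); lia.
Qed.

Lemma psum_ones_geometric (z : C) (n : nat) :
  Cmult (Cminus z (RtoC 1)) (psum (fun _ => RtoC 1) z n) = Cminus (Cpow z n) (RtoC 1).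
Proof.
  induction n as [|n IH]; simpl psum; simpl Cpow; [ring|].
  rewrite Cmult_plus_distr_l, IH; ring.
Qed.

Lemma psum_ones_root_of_unity (z : C) (n : nat) :
  Cpow z n = RtoC 1 -> z <> RtoC 1 -> psum (fun _ => RtoC 1) z n = RtoC 0.
Proof.
  intros Hn Hz.
  assert (Hz1 : Cminus z (RtoC 1) <> RtoC 0)
    by (intros E; apply Hz;
        replace z with (Cplus (Cminus z (RtoC 1)) (RtoC 1)) by ring; rewrite E; ring).
  pose proof (psum_ones_geometric z n) as G.
  rewrite Hn in G; unfold Cminus in G at 2; rewrite Cplus_opp_r in G.
  apply NNPP; intros Hs; exact (Cmult_neq_0 _ _ Hz1 Hs G).
Qed.

(* [sum_(j<n) z^j = 0], so these nonnegative values add up to [0]. *)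
Lemma Im_rotations_eq_0 (a z : C) (sigma : R) (n : nat) :
  Cpow z n = RtoC 1 -> z <> RtoC 1 ->
  (forall j, 0 <= sigma * Im (Cmult a (Cpow z j))) ->
  forall j, (j < n)%nat -> sigma * Im (Cmult a (Cpow z j)) = 0.
Proof.
  intros Hn Hz Hpos.
  set (g j := sigma * Im (Cmult a (Cpow z j))).
  set (f m := sigma * Im (Cmult a (psum (fun _ => RtoC 1) z m))).
  assert (HS : forall m, f (S m) = f m + g m)
    by (intros m; unfold f, g; simpl psum; rewrite Cmult_plus_distr_l, Im_Cplus, Cmult_1_l; ring).
  assert (Hf0 : forall m, 0 <= f m).
  { induction m as [|m IH].
    - unfold f; simpl psum; rewrite Cmult_0_r; simpl; lra.
    - rewrite HS; pose proof (Hpos m); fold (g m) in *; lra. }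
  assert (Hle : forall m j, (j < m)%nat -> g j <= f m).
  { induction m as [|m IH]; intros j Hj; [lia|]; rewrite HS.
    destruct (Nat.eq_dec j m) as [->|E]; [pose proof (Hf0 m); lra|].
    pose proof (IH j ltac:(lia)); pose proof (Hpos m); fold (g m) in *; lra. }
  assert (Hfn : f n = 0)
    by (unfold f; rewrite (psum_ones_root_of_unity z n Hn Hz), Cmult_0_r; simpl; ring).
  intros j Hj; pose proof (Hle n j Hj); pose proof (Hpos j); fold (g j) in *; lra.
Qed.

Lemma rotation_sign (N k : nat) (a : C) (sigma : R) :
  (1 <= N)%nat -> sigma <> 0 -> a <> RtoC 0 -> ((k mod N = 0)%nat -> Re a = 0) ->
  (forall j, 0 <= sigma * Im (Cmult a (Cpow (polar 1 (PI * INR k / INR N)) j))) ->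
  (exists L, k = (2 * N * L)%nat) /\ 0 < sigma * Im a.
Proof.
  intros HN Hs Ha Hre Hpos.
  set (z := polar 1 (PI * INR k / INR N)) in Hpos.
  assert (Ha0 : 0 <= sigma * Im a)
    by (specialize (Hpos O); simpl Cpow in Hpos; rewrite Cmult_1_r in Hpos; exact Hpos).
  destruct (classic (z = RtoC 1)) as [Hz|Hz].
  - destruct (polar_1_eq_1 N k HN Hz) as [L HL]; split; [now exists L|].
    assert (Hk : (k mod N = 0)%nat)
      by (rewrite HL; apply mul_2N_mod_N).
    assert (Im a <> 0) by (intros E; exact (Ha (C_Re_Im_eq_0 a (Hre Hk) E))).
    destruct (Rle_lt_or_eq_dec _ _ Ha0) as [|E]; [assumption|].
    symmetry in E; apply Rmult_integral in E; tauto.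
  - exfalso.
    pose proof (Im_rotations_eq_0 a z sigma (2 * N) (polar_1_pow_2N N k HN) Hz Hpos) as H0.
    pose proof (H0 O ltac:(lia)) as G0; pose proof (H0 1%nat ltac:(lia)) as G1.
    simpl Cpow in G0, G1; rewrite Cmult_1_r in G0, G1.
    apply Rmult_integral in G0; destruct G0 as [|G0]; [tauto|].
    apply Rmult_integral in G1; destruct G1 as [|G1]; [tauto|].
    rewrite Im_Cmult, G0 in G1; unfold z, polar, Im in G1; simpl in G1.
    assert (Re a <> 0) by (intros E; exact (Ha (C_Re_Im_eq_0 a E G0))).
    assert (Hsin : sin (PI * INR k / INR N) = 0) by nra.
    exact (H (Hre (sin_PI_div_eq_0 N k HN Hsin))).
Qed.

Lemma Rle_0_of_perturbation (Y K : R) :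
  (forall q, 0 < q -> q <= / 2 -> 0 <= Y + K * q) -> 0 <= Y.
Proof.
  intros H; destruct (Rle_or_lt 0 Y) as [|HY]; [assumption|exfalso].
  pose proof (Rabs_pos K); pose proof (Rle_abs K).
  set (D := 2 * (Rabs K + 1) - 2 * Y).
  assert (HD : 0 < D) by (unfold D; lra).
  set (q := - Y / D).
  assert (Hq : q * D = - Y) by (unfold q; field; lra).
  assert (0 < q) by (unfold q; apply Rdiv_lt_0_compat; lra).
  specialize (H q ltac:(lra) ltac:(unfold D in Hq; nra)).
  unfold D in Hq; nra.
Qed.

Definition signed_on_rays (sigma : R) (N : nat) (phi : nat -> C) : Prop :=
  forall t : C, in_domain phi t -> Im (Cpow t N) = 0 ->
  forall l : C, series_value phi t l -> 0 <= sigma * Im l.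

Section LeadingTerm.

Variables (N : nat) (phi c : nat -> C) (psi0 : nat -> R) (rho M : R) (k0 : nat).
Hypotheses (Hrho : 0 < rho)
  (Hphi : forall k, Cmod (phi k) * rho ^ k <= M) (Hc : forall k, Cmod (c k) * rho ^ k <= M)
  (Hsplit : forall k, phi k = Cplus (subst_pow psi0 N k) (c k))
  (Hpre : forall k, (k < k0)%nat -> c k = RtoC 0).

Lemma Im_series_value_near_leading (q : R) (t l : C) :
  0 <= q -> q <= / 2 -> Cmod t <= q * rho -> Im (Cpow t N) = 0 -> series_value phi t l ->
  Rabs (Im l - Im (Cmult (c k0) (Cpow t k0))) <= 2 * M * q ^ S k0.
Proof.
  intros Hq0 Hq1 Ht HtN Hl; apply Rle_plus_epsilon; intros eps He.
  destruct (Hl eps He) as [K HK].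
  set (n := Nat.max K (S k0)); specialize (HK n ltac:(lia)).
  assert (Hphic : Im (psum phi t n) = Im (psum c t n))
    by (rewrite (psum_plus _ _ _ t n Hsplit), Im_Cplus, Im_psum_subst_pow; auto; ring).
  assert (Hlead : psum c t (S k0) = Cmult (c k0) (Cpow t k0))
    by (simpl psum; rewrite (psum_zero_prefix c t k0 k0 Hpre (le_n _)); ring).
  pose proof (psum_tail_bound c t rho M q Hrho Hc Hq0 Hq1 Ht (S k0) n ltac:(lia)) as Htail.
  rewrite Hlead in Htail.
  pose proof (Im_le_Cmod (Cminus (psum c t n) (Cmult (c k0) (Cpow t k0)))) as H1.
  pose proof (Im_le_Cmod (Cminus (psum phi t n) l)) as H2.
  rewrite Im_Cminus in H1, H2; rewrite Hphic in H2.
  pose proof (pow_le q n Hq0); pose proof (coef_bound_nonneg c rho M Hc).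
  apply Rabs_le_between in H1, H2; apply Rabs_le_between; nra.
Qed.

Lemma leading_coef_sign (sigma : R) : (sigma = 1 \/ sigma = -1) -> signed_on_rays sigma N phi ->
  forall x, sin (INR N * x) = 0 -> 0 <= sigma * Im (Cmult (c k0) (polar 1 (INR k0 * x))).
Proof.
  intros Hsig Hsign x Hx.
  set (X := Im (Cmult (c k0) (polar 1 (INR k0 * x)))).
  pose proof (pow_lt rho k0 Hrho).
  enough (0 <= sigma * X * rho ^ k0) by nra.
  apply (Rle_0_of_perturbation _ (2 * M)); intros q Hq0 Hq1.
  set (t := polar (q * rho) x).
  assert (Ht : Cmod t = q * rho) by (apply Cmod_polar; nra).
  assert (HtN : Im (Cpow t N) = 0)
    by (unfold t; rewrite Cpow_polar; unfold polar, Im; simpl; rewrite Hx; ring).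
  assert (Hdom : in_domain phi t) by (exists rho; split; [nra | now exists M]).
  destruct (series_value_exists phi t rho M q Hrho Hphi ltac:(lra) Hq1 ltac:(lra)) as [l Hl].
  pose proof (Hsign t Hdom HtN l Hl) as Hsl.
  pose proof (Im_series_value_near_leading q t l ltac:(lra) Hq1 ltac:(lra) HtN Hl) as Hnear.
  unfold t in Hnear; rewrite Cpow_polar, Im_Cmult_polar in Hnear; fold X in Hnear.
  apply Rabs_le_between in Hnear.
  rewrite Rpow_mult_distr in Hnear; simpl pow in Hnear.
  pose proof (pow_lt q k0 Hq0).
  assert (0 <= q ^ k0 * (sigma * X * rho ^ k0 + 2 * M * q))
    by (destruct Hsig; subst sigma; nra).
  apply Rmult_le_reg_l with (q ^ k0); [assumption|]; lra.
Qed.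

End LeadingTerm.

Definition re_subseries (phi : nat -> C) (N j : nat) : R := Re (phi (j * N)%nat).

Definition rest (N : nat) (phi : nat -> C) (k : nat) : C :=
  Cminus (phi k) (subst_pow (re_subseries phi N) N k).

Lemma phi_split_rest (N : nat) (phi : nat -> C) (k : nat) :
  phi k = Cplus (subst_pow (re_subseries phi N) N k) (rest N phi k).
Proof. unfold rest; ring. Qed.

Lemma rest_mod0 (N : nat) (phi : nat -> C) (k : nat) :
  (k mod N = 0)%nat -> rest N phi k = (0, Im (phi k)).
Proof.
  intros H; unfold rest, subst_pow, re_subseries; rewrite H; simpl Nat.eqb; cbv iota.
  replace (k / N * N)%nat with k by (pose proof (Nat.div_mod_eq k N); lia).
  destruct (phi k); apply injective_projections; simpl; ring.
Qed.

Lemma rest_not_mod0 (N : nat) (phi : nat -> C) (k : nat) :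
  (k mod N <> 0)%nat -> rest N phi k = phi k.
Proof. intros H; unfold rest, subst_pow; apply Nat.eqb_neq in H; rewrite H; ring. Qed.

Lemma Cmod_rest_le (N : nat) (phi : nat -> C) (k : nat) : Cmod (rest N phi k) <= Cmod (phi k).
Proof.
  destruct (Nat.eq_dec (k mod N) 0) as [E|E]; [|rewrite rest_not_mod0 by assumption; lra].
  rewrite rest_mod0 by assumption.
  pose proof (Cmod2_alt (0, Im (phi k))); pose proof (Cmod2_alt (phi k)).
  pose proof (Cmod_ge_0 (0, Im (phi k))); pose proof (Cmod_ge_0 (phi k)).
  pose proof (pow2_ge_0 (Re (phi k))); unfold Re, Im in *; simpl in *; nra.
Qed.

Lemma re_subseries_convergentR (N : nat) (phi : nat -> C) :
  convergent phi -> convergentR (re_subseries phi N).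
Proof.
  intros [rho [Hrho [M HM]]]; exists (rho ^ N); split; [now apply pow_lt|].
  exists M; intros j; unfold re_subseries; rewrite <- pow_mult, (Nat.mul_comm N j).
  pose proof (re_le_Cmod (phi (j * N)%nat)); pose proof (HM (j * N)%nat).
  pose proof (pow_le rho (j * N) (Rlt_le _ _ Hrho)); nra.
Qed.

Lemma convergent_rest (N : nat) (phi : nat -> C) : convergent phi -> convergent (rest N phi).
Proof.
  intros [rho [Hrho [M HM]]]; exists rho; split; [assumption|]; exists M; intros k.
  pose proof (Cmod_rest_le N phi k); pose proof (HM k).
  pose proof (pow_le rho k (Rlt_le _ _ Hrho)); nra.
Qed.

Lemma rest_leading_coef (N : nat) (phi : nat -> C) (sigma : R) (k0 : nat) :
  (1 <= N)%nat -> convergent phi -> (sigma = 1 \/ sigma = -1) -> signed_on_rays sigma N phi ->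
  (forall k, (k < k0)%nat -> rest N phi k = RtoC 0) -> rest N phi k0 <> RtoC 0 ->
  (exists L, k0 = (2 * N * L)%nat) /\ 0 < sigma * Im (phi k0).
Proof.
  intros HN [rho [Hrho [M HM]]] Hsig Hsign Hpre Hk0.
  assert (HMrest : forall k, Cmod (rest N phi k) * rho ^ k <= M).
  { intros k; pose proof (Cmod_rest_le N phi k); pose proof (HM k).
    pose proof (pow_le rho k (Rlt_le _ _ Hrho)); nra. }
  assert (HNR : INR N <> 0) by (apply not_0_INR; lia).
  assert (Hrot : forall j, 0 <= sigma * Im (Cmult (rest N phi k0)
                   (Cpow (polar 1 (PI * INR k0 / INR N)) j))).
  { intros j; rewrite Cpow_polar, pow1.
    replace (INR j * (PI * INR k0 / INR N)) with (INR k0 * (PI * INR j / INR N))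
      by (field; assumption).
    apply (leading_coef_sign N phi _ _ rho M k0 Hrho HM HMrest (phi_split_rest N phi) Hpre
             sigma Hsig Hsign).
    replace (INR N * (PI * INR j / INR N)) with (PI * INR j) by (field; assumption).
    apply sin_PI_INR. }
  assert (Hre : (k0 mod N = 0)%nat -> Re (rest N phi k0) = 0)
    by (intros E; now rewrite rest_mod0).
  destruct (rotation_sign N k0 _ sigma HN ltac:(lra) Hk0 Hre Hrot) as [[L HL] Hpos].
  split; [now exists L|].
  rewrite rest_mod0 in Hpos; [exact Hpos|].
  rewrite HL; apply mul_2N_mod_N.
Qed.

Lemma signed_on_rays_of_real (N : nat) (phi : nat -> C) (sigma : R) :
  (forall t : C, in_domain phi t -> Im (Cpow t N) = 0 ->
     forall l : C, series_value phi t l -> Im l = 0) ->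
  signed_on_rays sigma N phi.
Proof. intros H t Ht HtN l Hl; rewrite (H t Ht HtN l Hl); lra. Qed.

Lemma rest_eq_0_of_real (N : nat) (phi : nat -> C) :
  (1 <= N)%nat -> convergent phi -> signed_on_rays 1 N phi -> signed_on_rays (-1) N phi ->
  forall k, rest N phi k = RtoC 0.
Proof.
  intros HN Hconv Hpos Hneg; apply NNPP; intros Hrest.
  destruct (first_nonzero_coef _ Hrest) as [k0 [Hk0 Hpre]].
  destruct (rest_leading_coef N phi 1 k0 HN Hconv (or_introl eq_refl) Hpos Hpre Hk0) as [_ H1].
  destruct (rest_leading_coef N phi (-1) k0 HN Hconv (or_intror eq_refl) Hneg Hpre Hk0)
    as [_ H2].
  lra.
Qed.

Lemma rest_decomposition (N : nat) (phi : nat -> C) :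
  (1 <= N)%nat -> convergent phi -> phi O = RtoC 0 -> signed_on_rays 1 N phi ->
  exists L, (1 <= L)%nat /\ exists b, 0 <= b /\
  exists psi1, convergent psi1 /\ psi1 O = RtoC 1 /\
  forall k, rest N phi k = Cmult (Cmult Ci (RtoC b)) (shift (2 * L * N) psi1 k).
Proof.
  intros HN Hconv H0 Hsign.
  destruct (classic (forall k, rest N phi k = RtoC 0)) as [Hzero|Hrest].
  { exists 1%nat; split; [lia|]; exists 0; split; [lra|].
    exists (fun _ => RtoC 1); split; [apply convergent_const|]; split; [reflexivity|].
    intros k; rewrite Hzero; ring. }
  destruct (first_nonzero_coef _ Hrest) as [k0 [Hk0 Hpre]].
  destruct (rest_leading_coef N phi 1 k0 HN Hconv (or_introl eq_refl) Hsign Hpre Hk0)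
    as [[L HL] Hb].
  rewrite Rmult_1_l in Hb.
  assert (Hk0N : (k0 mod N = 0)%nat)
    by (rewrite HL; apply mul_2N_mod_N).
  assert (HL1 : (1 <= L)%nat).
  { destruct L as [|L]; [|lia]; exfalso; apply Hk0.
    rewrite HL, Nat.mul_0_r, rest_mod0, H0 by apply Nat.Div0.mod_0_l; reflexivity. }
  assert (Hlead : rest N phi k0 = Cmult Ci (RtoC (Im (phi k0)))).
  { rewrite rest_mod0 by assumption; apply injective_projections; simpl; ring. }
  destruct (convergent_shift_factor _ k0 (convergent_rest N phi Hconv) Hpre Hk0)
    as [psi1 [Hpsi1 [Hpsi10 Hfactor]]].
  exists L; split; [assumption|]; exists (Im (phi k0)); split; [lra|].
  exists psi1; split; [assumption|]; split; [assumption|].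
  intros k; rewrite Hfactor, Hlead; do 3 f_equal; lia.
Qed.

Theorem proposition3p3 (N : nat) (phi : nat -> C) :
  (1 <= N)%nat ->
  convergent phi ->
  phi 0%nat = RtoC 0 ->
  (forall t : C, in_domain phi t -> Im (Cpow t N) = 0 ->
     forall l : C, series_value phi t l -> 0 <= Im l) ->
  (exists psi0 : nat -> R, convergentR psi0 /\
   exists L : nat, (1 <= L)%nat /\
   exists b : R, 0 <= b /\
   exists psi1 : nat -> C, convergent psi1 /\ psi1 0%nat = RtoC 1 /\
   forall k : nat,
     phi k = Cplus (subst_pow psi0 N k)
                   (Cmult (Cmult Ci (RtoC b)) (shift (2 * L * N) psi1 k)))
  /\
  ((forall t : C, in_domain phi t -> Im (Cpow t N) = 0 ->
      forall l : C, series_value phi t l -> Im l = 0)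
   <->
   (exists psi0 : nat -> R, convergentR psi0 /\
      forall k : nat, phi k = subst_pow psi0 N k)).
Proof.
  intros HN Hconv H0 Hsign.
  assert (Hsign1 : signed_on_rays 1 N phi)
    by (intros t Ht HtN l Hl; rewrite Rmult_1_l; exact (Hsign t Ht HtN l Hl)).
  split; [|split].
  - exists (re_subseries phi N); split; [now apply re_subseries_convergentR|].
    destruct (rest_decomposition N phi HN Hconv H0 Hsign1)
      as [L [HL [b [Hb [psi1 [Hpsi1 [Hpsi10 Hrest]]]]]]].
    exists L; split; [assumption|]; exists b; split; [assumption|].
    exists psi1; split; [assumption|]; split; [assumption|].
    intros k; rewrite <- Hrest; apply phi_split_rest.
  - intros Hreal; exists (re_subseries phi N); split; [now apply re_subseries_convergentR|].
    intros k; rewrite (phi_split_rest N phi k).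
    rewrite (rest_eq_0_of_real N phi HN Hconv (signed_on_rays_of_real N phi 1 Hreal)
               (signed_on_rays_of_real N phi (-1) Hreal)); ring.
  - intros [psi0 [_ Hpsi0]] t _ HtN l Hl; apply (Im_series_value_eq_0 phi t l); [|exact Hl].
    intros n; rewrite (psum_ext _ _ t n Hpsi0); now apply Im_psum_subst_pow.
Qed.
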